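(* Let $\Omega_n=\dfrac{\pi^{n/2}}{\Gamma\left(\frac n2+1\right)}$ for $n\in\mathbb{N}_0$. As $n\to\infty$, the following asymptotic series holds: \[ \ln\frac{\Omega_n^2}{\Omega_{n-1}\Omega_{n+1}}=\sum_{j=1}^\infty\frac{\lambda_j}{n^j},\qquad \lambda_j=(-1)^j\left\{2B_{j+1}(1)-B_{j+1}\left(\tfrac12\right)-B_{j+1}\left(\tfrac32\right)\right\}\frac{2^j}{j(j+1)}\quad(j\in\mathbb{N}), \] where $B_m(x)$ denote the Bernoulli polynomials.
   Context: $\Omega_n$ is the volume of the unit ball in $\mathbb{R}^n$; $\Gamma$ is Euler's gamma function. The Bernoulli polynomials are defined by $\frac{te^{xt}}{e^t-1}=\sum_{m\ge0}B_m(x)\frac{t^m}{m!}$. The series equality is an asymptotic expansion: for every $N$, the left side minus $\sum_{j=1}^N\lambda_jn^{-j}$ is $O(n^{-N-1})$ as $n\to\infty$. *)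

From Stdlib Require Import Reals List.
From Coquelicot Require Import Coquelicot.
Import ListNotations.
Open Scope R_scope.

Definition sum_range (a len : nat) (f : nat -> R) : R :=
  fold_right Rplus 0 (map f (seq a len)).

Definition Gamma (x : R) : R :=
  RInt_gen (fun t => Rpower t (x - 1) * exp (- t))
           (at_right 0) (Rbar_locally p_infty).

(* volume of the unit ball in R^n *)
Definition Omega (n : nat) : R :=
  Rpower PI (INR n / 2) / Gamma (INR n / 2 + 1).

(* Bernoulli numbers B_0, ..., B_m (convention B_1 = -1/2, i.e. t/(e^t-1)),
   via the recurrence  sum_{k=0}^{m} C(m+1,k) B_k = 0  (m >= 1). *)
Fixpoint bern_list (m : nat) : list R :=
  match m with
  | O => [1]
  | S m' =>
      let l := bern_list m' in
      l ++ [ - / (INR m + 1) *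
             sum_range 0 m (fun k => Binomial.C (m + 1)%nat k * nth k l 0) ]
  end.

Definition bernoulli_number (m : nat) : R := nth m (bern_list m) 0.

(* Bernoulli polynomial B_m(x) = sum_{k=0}^m C(m,k) B_k x^(m-k),
   equivalently t e^{xt}/(e^t-1) = sum_m B_m(x) t^m / m! *)
Definition bernoulli_poly (m : nat) (x : R) : R :=
  sum_range 0 (S m) (fun k => Binomial.C m k * bernoulli_number k * x ^ (m - k)%nat).

Definition lambda (j : nat) : R :=
  (-1) ^ j *
  (2 * bernoulli_poly (S j) 1 - bernoulli_poly (S j) (1/2)
     - bernoulli_poly (S j) (3/2))
  * 2 ^ j / (INR j * (INR j + 1)).

(* With [y = (n+1)/2] the quantity expanded is [ln (Gamma y Gamma (y+1) / Gamma (y+1/2)^2)].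
   Log-convexity of [Gamma] (Cauchy-Schwarz on Euler's integral) makes it nonnegative, and
   [Gamma (x+1) = x Gamma x] shows that its values at [n] and [n+1] add up to
   [ln ((n+2)/(n+1))].  The truncated series satisfies the same two-term relation up to
   [O(n^-(N+2))]: with [v = 1/n] one has [1/(n+1) = v/(1+v)], and the vanishing of the
   Taylor coefficients of the defect is an identity between Bernoulli polynomials coming
   from [B_m(x+1) - B_m(x) = m x^(m-1)].  Hence the remainder [e] tends to [0] while
   [e n + e (n+1) = O(n^-(N+2))], and summing the alternating series of these pair sums
   gives [e n = O(n^-(N+1))]. *)

From Stdlib Require Import Reals List Lra Lia.
From Coquelicot Require Import Coquelicot.
Open Scope R_scope.

Fixpoint rsum (n : nat) (f : nat -> R) : R :=
  match n with O => 0 | S n => rsum n f + f n end.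

Lemma rsum_S n f : rsum (S n) f = rsum n f + f n.
Proof. reflexivity. Qed.

Lemma rsum_ext n f g : (forall i, (i < n)%nat -> f i = g i) -> rsum n f = rsum n g.
Proof.
  induction n; simpl; intros H; auto.
  rewrite IHn by (intros; apply H; lia). rewrite H by lia. reflexivity.
Qed.

Lemma rsum_plus n f g : rsum n (fun i => f i + g i) = rsum n f + rsum n g.
Proof. induction n; simpl; [lra | rewrite IHn; lra]. Qed.

Lemma rsum_minus n f g : rsum n (fun i => f i - g i) = rsum n f - rsum n g.
Proof. induction n; simpl; [lra | rewrite IHn; lra]. Qed.

Lemma rsum_scal n c f : rsum n (fun i => c * f i) = c * rsum n f.
Proof. induction n; simpl; [lra | rewrite IHn; lra]. Qed.

Lemma rsum_eq0 n f : (forall i, (i < n)%nat -> f i = 0) -> rsum n f = 0.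
Proof.
  induction n; simpl; intros H; auto.
  rewrite IHn by (intros; apply H; lia). rewrite H by lia. lra.
Qed.

Lemma rsum_shift n f : rsum (S n) f = f O + rsum n (fun i => f (S i)).
Proof. induction n; simpl in *; [lra|]. rewrite IHn. lra. Qed.

Lemma rsum_add_len p q f : rsum (p + q) f = rsum p f + rsum q (fun k => f (p + k)%nat).
Proof.
  induction q; simpl; [rewrite Nat.add_0_r; lra|].
  rewrite Nat.add_succ_r; simpl. rewrite IHq; lra.
Qed.

Lemma rsum_pad n m f : (n <= m)%nat -> (forall i, (n <= i < m)%nat -> f i = 0) ->
  rsum m f = rsum n f.
Proof.
  intros Hnm Hf. replace m with (n + (m - n))%nat by lia.
  rewrite rsum_add_len, (rsum_eq0 (m - n)); [lra|]. intros; apply Hf; lia.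
Qed.

Lemma rsum_single n k f : (k < n)%nat -> (forall i, (i < n)%nat -> i <> k -> f i = 0) ->
  rsum n f = f k.
Proof.
  intros Hk Hf. replace n with (k + S (n - S k))%nat by lia.
  rewrite rsum_add_len, rsum_shift, !rsum_eq0, Nat.add_0_r; try lra;
    intros; apply Hf; lia.
Qed.

Lemma Rabs_rsum n f : Rabs (rsum n f) <= rsum n (fun i => Rabs (f i)).
Proof.
  induction n; simpl; [rewrite Rabs_R0; lra|].
  eapply Rle_trans; [apply Rabs_triang | lra].
Qed.

Lemma rsum_le n f g : (forall i, (i < n)%nat -> f i <= g i) -> rsum n f <= rsum n g.
Proof.
  induction n; simpl; intros H; [lra|].
  assert (rsum n f <= rsum n g) by (apply IHn; intros; apply H; lia).
  assert (f n <= g n) by (apply H; lia). lra.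
Qed.

Lemma rsum_ge0 n f : (forall i, (i < n)%nat -> 0 <= f i) -> 0 <= rsum n f.
Proof. intros H. rewrite <- (rsum_eq0 n (fun _ => 0)) by auto. apply rsum_le; auto. Qed.

Lemma rsum_telescope m (u : nat -> R) : rsum m (fun i => u i - u (S i)) = u O - u m.
Proof. induction m; simpl; [ring|]. rewrite IHm. ring. Qed.

Lemma rsum_rev n f : rsum n f = rsum n (fun i => f (n - S i)%nat).
Proof.
  induction n; auto.
  rewrite rsum_S, (rsum_shift n (fun i => f (S n - S i)%nat)), IHn.
  replace (S n - 1)%nat with n by lia. rewrite Rplus_comm. reflexivity.
Qed.

Lemma rsum_antidiagonal K (F : nat -> nat -> R) :
  rsum K (fun m => rsum (S m) (fun i => F i (m - i)%nat)) =
  rsum K (fun i => rsum (K - i) (fun j => F i j)).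
Proof.
  induction K; [reflexivity|].
  rewrite (rsum_ext (S K) (fun i => rsum (S K - i) (fun j => F i j))
    (fun i => (if Nat.eqb i K then 0 else rsum (K - i) (fun j => F i j)) + F i (K - i)%nat)).
  2:{ intros i Hi. destruct (Nat.eqb_spec i K) as [->|].
      - replace (S K - K)%nat with 1%nat by lia. rewrite Nat.sub_diag. simpl. lra.
      - replace (S K - i)%nat with (S (K - i)) by lia. reflexivity. }
  rewrite rsum_plus, rsum_S, IHK. f_equal.
  rewrite rsum_S, Nat.eqb_refl, Rplus_0_r. apply rsum_ext. intros i Hi.
  destruct (Nat.eqb_spec i K); [lia | reflexivity].
Qed.

Lemma rsum_triangle_swap M (F : nat -> nat -> R) :
  rsum (S M) (fun k => rsum (S (M - k)) (fun l => F k l)) =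
  rsum (S M) (fun l => rsum (S (M - l)) (fun k => F k l)).
Proof.
  transitivity (rsum (S M) (fun i => rsum (S M - i) (fun j => F i j))).
  { apply rsum_ext; intros; f_equal; lia. }
  transitivity (rsum (S M) (fun i => rsum (S M - i) (fun j => F j i))).
  2:{ apply rsum_ext; intros; f_equal; lia. }
  rewrite <- (rsum_antidiagonal (S M) F), <- (rsum_antidiagonal (S M) (fun a b => F b a)).
  apply rsum_ext. intros m _. rewrite rsum_rev. apply rsum_ext. intros i Hi. f_equal; lia.
Qed.

Lemma sum_range_rsum a len f : sum_range a len f = rsum len (fun i => f (a + i)%nat).
Proof.
  revert a; induction len; intros a; [reflexivity|].
  transitivity (f a + sum_range (S a) len f); [reflexivity|].
  rewrite IHlen, (rsum_shift len), Nat.add_0_r. f_equal.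
  apply rsum_ext; intros. f_equal; lia.
Qed.

Lemma sum_f_R0_rsum f n : sum_f_R0 f n = rsum (S n) f.
Proof. induction n; simpl; [lra|]. rewrite IHn. reflexivity. Qed.

Lemma pow_unit_interval v k : 0 <= v <= 1 -> 0 <= v ^ k <= 1.
Proof.
  intros Hv; induction k; simpl; [lra|]. split; [apply Rmult_le_pos; lra|].
  replace 1 with (1 * 1) by lra. apply Rmult_le_compat; lra.
Qed.

Lemma pow_le_pow_unit v m n : 0 <= v <= 1 -> (m <= n)%nat -> v ^ n <= v ^ m.
Proof.
  intros Hv Hmn. replace n with (m + (n - m))%nat by lia. rewrite pow_add.
  pose proof (pow_unit_interval v m Hv). pose proof (pow_unit_interval v (n - m) Hv).
  replace (v ^ m) with (v ^ m * 1) at 2 by lra. apply Rmult_le_compat_l; lra.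
Qed.

Definition kdelta (k m : nat) : R := if Nat.eqb m k then 1 else 0.

Definition partial_series (K : nat) (a : nat -> R) (v : R) : R :=
  rsum K (fun m => a m * v ^ m).

Definition has_expansion (phi : R -> R) (a : nat -> R) : Prop :=
  forall K, exists C d, 0 < d <= 1 /\
    forall v, 0 < v <= d -> Rabs (phi v - partial_series K a v) <= C * v ^ K.

Definition cauchy_prod (a b : nat -> R) (m : nat) : R :=
  rsum (S m) (fun i => a i * b (m - i)%nat).

Lemma has_expansion_ext phi psi a b :
  (forall v, 0 < v -> phi v = psi v) -> (forall m, a m = b m) ->
  has_expansion phi a -> has_expansion psi b.
Proof.
  intros Hphi Ha H K. destruct (H K) as (C & d & Hd & HC). exists C, d; split; auto.
  intros v Hv. rewrite <- Hphi by lra. unfold partial_series.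
  rewrite (rsum_ext K _ (fun m => a m * v ^ m)) by (intros; rewrite Ha; auto).
  apply HC; auto.
Qed.

Lemma has_expansion_plus phi psi a b : has_expansion phi a -> has_expansion psi b ->
  has_expansion (fun v => phi v + psi v) (fun m => a m + b m).
Proof.
  intros H1 H2 K. destruct (H1 K) as (C1 & d1 & Hd1 & HC1).
  destruct (H2 K) as (C2 & d2 & Hd2 & HC2).
  pose proof (Rmin_l d1 d2). pose proof (Rmin_r d1 d2).
  exists (C1 + C2), (Rmin d1 d2). split; [split; [apply Rmin_glb_lt|]; lra|].
  intros v Hv. specialize (HC1 v ltac:(lra)). specialize (HC2 v ltac:(lra)).
  unfold partial_series in *.
  rewrite (rsum_ext K _ (fun m => a m * v ^ m + b m * v ^ m)), rsum_plus by (intros; ring).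
  eapply Rle_trans; [|rewrite Rmult_plus_distr_r; apply Rplus_le_compat; eauto].
  eapply Rle_trans; [|apply Rabs_triang]. right; f_equal; ring.
Qed.

Lemma has_expansion_scal c phi a : has_expansion phi a ->
  has_expansion (fun v => c * phi v) (fun m => c * a m).
Proof.
  intros H K. destruct (H K) as (C & d & Hd & HC). exists (Rabs c * C), d. split; auto.
  intros v Hv. unfold partial_series in *.
  rewrite (rsum_ext K _ (fun m => c * (a m * v ^ m))), rsum_scal by (intros; ring).
  rewrite <- Rmult_minus_distr_l, Rabs_mult, Rmult_assoc.
  apply Rmult_le_compat_l; [apply Rabs_pos | apply HC; auto].
Qed.

Lemma has_expansion_minus phi psi a b : has_expansion phi a -> has_expansion psi b ->
  has_expansion (fun v => phi v - psi v) (fun m => a m - b m).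
Proof.
  intros H1 H2.
  apply (has_expansion_ext (fun v => phi v + (-1) * psi v) _ (fun m => a m + (-1) * b m));
    [intros; ring | intros; ring |].
  apply has_expansion_plus, has_expansion_scal; auto.
Qed.

Lemma has_expansion_0 : has_expansion (fun _ => 0) (fun _ => 0).
Proof.
  intros K. exists 0, 1. split; [lra|]. intros v Hv. unfold partial_series.
  rewrite rsum_eq0, Rminus_0_r, Rabs_R0 by (intros; ring). lra.
Qed.

Lemma has_expansion_rsum n F a : (forall j, (j < n)%nat -> has_expansion (F j) (a j)) ->
  has_expansion (fun v => rsum n (fun j => F j v)) (fun m => rsum n (fun j => a j m)).
Proof.
  induction n; intros H; [apply has_expansion_0|].
  apply has_expansion_plus; [apply IHn; intros; apply H; lia | apply H; lia].
Qed.

Lemma has_expansion_vanishing phi a K : has_expansion phi a ->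
  (forall m, (m < K)%nat -> a m = 0) ->
  exists C d, 0 < d <= 1 /\ forall v, 0 < v <= d -> Rabs (phi v) <= C * v ^ K.
Proof.
  intros H Ha. destruct (H K) as (C & d & Hd & HC). exists C, d; split; auto.
  intros v Hv. specialize (HC v Hv). unfold partial_series in HC.
  rewrite rsum_eq0, Rminus_0_r in HC; auto. intros i Hi; rewrite Ha; auto; ring.
Qed.

Lemma has_expansion_bounded phi a : has_expansion phi a ->
  exists B d, 0 < d <= 1 /\ forall v, 0 < v <= d -> Rabs (phi v) <= B.
Proof.
  intros H. destruct (has_expansion_vanishing phi a 0 H) as (C & d & Hd & HC); [lia|].
  exists C, d; split; auto. intros v Hv. rewrite <- (Rmult_1_r C). apply HC; auto.
Qed.

Lemma Rabs_partial_series K a v : 0 <= v <= 1 ->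
  Rabs (partial_series K a v) <= rsum K (fun m => Rabs (a m)).
Proof.
  intros Hv. eapply Rle_trans; [apply Rabs_rsum|]. apply rsum_le. intros i _.
  rewrite Rabs_mult. pose proof (pow_unit_interval v i Hv).
  rewrite (Rabs_pos_eq (v ^ i)) by lra.
  rewrite <- (Rmult_1_r (Rabs (a i))) at 2. apply Rmult_le_compat_l; [apply Rabs_pos | lra].
Qed.

Lemma partial_series_cauchy_prod K a b v :
  partial_series K (cauchy_prod a b) v =
  rsum K (fun i => a i * v ^ i * partial_series (K - i) b v).
Proof.
  unfold partial_series, cauchy_prod.
  rewrite (rsum_ext K _ (fun m => rsum (S m)
             (fun i => a i * v ^ i * (b (m - i)%nat * v ^ (m - i)%nat)))).
  - rewrite (rsum_antidiagonal K (fun i j => a i * v ^ i * (b j * v ^ j))).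
    apply rsum_ext. intros i _. rewrite <- rsum_scal. apply rsum_ext; intros; ring.
  - intros m _. rewrite Rmult_comm, <- rsum_scal. apply rsum_ext. intros i Hi.
    replace (v ^ m) with (v ^ i * v ^ (m - i)%nat) by (rewrite <- pow_add; f_equal; lia).
    ring.
Qed.

Lemma partial_series_tail K L b v : (L <= K)%nat -> 0 <= v <= 1 ->
  Rabs (partial_series K b v - partial_series L b v) <= v ^ L * rsum K (fun m => Rabs (b m)).
Proof.
  intros HL Hv. unfold partial_series.
  replace K with (L + (K - L))%nat by lia. rewrite !rsum_add_len.
  replace (_ + _ - _) with (rsum (K - L) (fun k => b (L + k)%nat * v ^ (L + k)%nat)) by ring.
  eapply Rle_trans; [apply Rabs_rsum|].
  eapply Rle_trans; [apply (rsum_le _ _ (fun k => v ^ L * Rabs (b (L + k)%nat)))|].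
  - intros k _. rewrite Rabs_mult, (Rmult_comm (v ^ L)).
    apply Rmult_le_compat_l; [apply Rabs_pos|].
    rewrite Rabs_pos_eq by (apply pow_le; lra). apply pow_le_pow_unit; auto; lia.
  - rewrite rsum_scal. apply Rmult_le_compat_l; [apply pow_le; lra|].
    assert (0 <= rsum L (fun m => Rabs (b m))) by (apply rsum_ge0; intros; apply Rabs_pos).
    lra.
Qed.

Lemma partial_series_mult_err K a b v : 0 <= v <= 1 ->
  Rabs (partial_series K a v * partial_series K b v - partial_series K (cauchy_prod a b) v)
  <= v ^ K * (rsum K (fun m => Rabs (a m)) * rsum K (fun m => Rabs (b m))).
Proof.
  intros Hv. set (B := rsum K (fun m => Rabs (b m))).
  rewrite partial_series_cauchy_prod. unfold partial_series at 1.
  rewrite Rmult_comm, <- rsum_scal, <- rsum_minus.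
  eapply Rle_trans; [apply Rabs_rsum|].
  replace (v ^ K * (rsum K (fun m => Rabs (a m)) * B))
    with (rsum K (fun i => Rabs (a i) * v ^ i * (v ^ (K - i) * B))).
  2:{ rewrite (rsum_ext K _ (fun i => v ^ K * B * Rabs (a i))), rsum_scal; [ring|].
      intros i Hi. replace (v ^ K) with (v ^ i * v ^ (K - i))
        by (rewrite <- pow_add; f_equal; lia). ring. }
  apply rsum_le. intros i Hi.
  replace (_ * (a i * v ^ i) - _) with
    (a i * v ^ i * (partial_series K b v - partial_series (K - i) b v)) by ring.
  rewrite !Rabs_mult, (Rabs_pos_eq (v ^ i)) by (apply pow_le; lra).
  apply Rmult_le_compat_l; [apply Rmult_le_pos; [apply Rabs_pos | apply pow_le; lra]|].
  apply partial_series_tail; auto; lia.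
Qed.

Lemma has_expansion_mult phi psi a b : has_expansion phi a -> has_expansion psi b ->
  has_expansion (fun v => phi v * psi v) (cauchy_prod a b).
Proof.
  intros H1 H2 K. destruct (H1 K) as (C1 & d1 & Hd1 & HC1).
  destruct (H2 K) as (C2 & d2 & Hd2 & HC2).
  destruct (has_expansion_bounded _ _ H2) as (B & d3 & Hd3 & HB).
  set (A := rsum K (fun m => Rabs (a m))). set (Bs := rsum K (fun m => Rabs (b m))).
  assert (0 <= A) by (apply rsum_ge0; intros; apply Rabs_pos).
  exists (Rabs C1 * Rabs B + A * Rabs C2 + A * Bs), (Rmin d1 (Rmin d2 d3)).
  pose proof (Rmin_l d1 (Rmin d2 d3)). pose proof (Rmin_r d1 (Rmin d2 d3)).
  pose proof (Rmin_l d2 d3). pose proof (Rmin_r d2 d3).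
  split; [split; [repeat apply Rmin_glb_lt|]; lra|].
  intros v Hv. assert (Hv1 : 0 <= v <= 1) by lra. pose proof (pow_unit_interval v K Hv1).
  assert (E1 : Rabs (phi v - partial_series K a v) <= Rabs C1 * v ^ K).
  { eapply Rle_trans; [apply HC1; lra | apply Rmult_le_compat_r; [lra | apply RRle_abs]]. }
  assert (E2 : Rabs (psi v - partial_series K b v) <= Rabs C2 * v ^ K).
  { eapply Rle_trans; [apply HC2; lra | apply Rmult_le_compat_r; [lra | apply RRle_abs]]. }
  assert (E3 : Rabs (psi v) <= Rabs B) by (eapply Rle_trans; [apply HB; lra | apply RRle_abs]).
  pose proof (partial_series_mult_err K a b v Hv1) as Herr.
  pose proof (Rabs_partial_series K a v Hv1) as Hpa. fold A in Hpa. fold A Bs in Herr.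
  replace (phi v * psi v - partial_series K (cauchy_prod a b) v) with
    ((phi v - partial_series K a v) * psi v
     + partial_series K a v * (psi v - partial_series K b v)
     + (partial_series K a v * partial_series K b v - partial_series K (cauchy_prod a b) v))
    by ring.
  eapply Rle_trans; [apply Rabs_triang|].
  eapply Rle_trans; [apply Rplus_le_compat_r, Rabs_triang|]. rewrite !Rabs_mult.
  assert (Rabs (phi v - partial_series K a v) * Rabs (psi v) <= Rabs C1 * v ^ K * Rabs B)
    by (apply Rmult_le_compat; auto; apply Rabs_pos).
  assert (Rabs (partial_series K a v) * Rabs (psi v - partial_series K b v)
          <= A * (Rabs C2 * v ^ K)) by (apply Rmult_le_compat; auto; apply Rabs_pos).
  nra.
Qed.

Lemma has_expansion_pow j : has_expansion (fun v => v ^ j) (kdelta j).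
Proof.
  intros K. exists 1, 1. split; [lra|]. intros v Hv. unfold partial_series, kdelta.
  destruct (Nat.ltb_spec j K).
  - rewrite (rsum_single K j), Nat.eqb_refl, Rmult_1_l, Rminus_eq_0, Rabs_R0; auto.
    + apply Rmult_le_pos; [lra | apply pow_le; lra].
    + intros i _ Hi. rewrite (proj2 (Nat.eqb_neq i j) Hi). ring.
  - rewrite rsum_eq0.
    + rewrite Rminus_0_r, Rmult_1_l, Rabs_pos_eq by (apply pow_le; lra).
      apply pow_le_pow_unit; auto; lra.
    + intros i Hi. rewrite (proj2 (Nat.eqb_neq i j)) by lia. ring.
Qed.

Lemma cauchy_prod_kdelta k a m :
  cauchy_prod (kdelta k) a m = if Nat.leb k m then a (m - k)%nat else 0.
Proof.
  unfold cauchy_prod, kdelta. destruct (Nat.leb_spec k m).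
  - rewrite (rsum_single (S m) k), Nat.eqb_refl; [ring | lia|].
    intros i _ Hi. rewrite (proj2 (Nat.eqb_neq i k) Hi). ring.
  - apply rsum_eq0. intros i Hi. rewrite (proj2 (Nat.eqb_neq i k)) by lia. ring.
Qed.

Lemma inv_1p_sub_partial_series K v : 0 <= v ->
  / (1 + v) - partial_series K (fun m => (-1) ^ m) v = (- v) ^ K / (1 + v).
Proof.
  intros Hv. induction K; unfold partial_series in *; [simpl; field; lra|].
  rewrite rsum_S.
  replace (/ (1 + v) - _) with
    ((/ (1 + v) - rsum K (fun m => (-1) ^ m * v ^ m)) - (-1) ^ K * v ^ K) by ring.
  rewrite IHK.
  replace ((-1) ^ K * v ^ K) with ((- v) ^ K) by (rewrite <- Rpow_mult_distr; f_equal; ring).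
  simpl. field. lra.
Qed.

Lemma has_expansion_inv_1p : has_expansion (fun v => / (1 + v)) (fun m => (-1) ^ m).
Proof.
  intros K. exists 1, 1. split; [lra|]. intros v Hv.
  rewrite inv_1p_sub_partial_series by lra. unfold Rdiv.
  rewrite Rabs_mult, <- RPow_abs, Rabs_Ropp, Rabs_pos_eq, Rabs_pos_eq
    by (try apply Rlt_le, Rinv_0_lt_compat; lra).
  rewrite Rmult_1_l. rewrite <- (Rmult_1_r (v ^ K)) at 2.
  apply Rmult_le_compat_l; [apply pow_le; lra|].
  rewrite <- Rinv_1. apply Rinv_le_contravar; lra.
Qed.

Lemma hockey_stick j m :
  rsum (S m) (fun i => Binomial.C (i + j) i) = Binomial.C (m + S j) m.
Proof.
  induction m; [simpl; rewrite !C_n_0; lra|].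
  rewrite rsum_S, IHm. replace (S m + j)%nat with (m + S j)%nat by lia.
  rewrite pascal by lia. reflexivity.
Qed.

Lemma has_expansion_inv_1p_pow j :
  has_expansion (fun v => (/ (1 + v)) ^ S j) (fun m => (-1) ^ m * Binomial.C (m + j) m).
Proof.
  induction j.
  - apply (has_expansion_ext (fun v => / (1 + v)) _ (fun m => (-1) ^ m) _
                               (fun v _ => eq_sym (pow_1 (/ (1 + v)))));
      [intros m; rewrite Nat.add_0_r, C_n_n; ring | apply has_expansion_inv_1p].
  - apply (has_expansion_ext (fun v => (/ (1 + v)) ^ S j * / (1 + v)) _
      (cauchy_prod (fun m => (-1) ^ m * Binomial.C (m + j) m) (fun m => (-1) ^ m)));
      [intros v _; simpl; ring | | apply has_expansion_mult, has_expansion_inv_1p; auto].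
    intros m. unfold cauchy_prod.
    rewrite (rsum_ext _ _ (fun i => (-1) ^ m * Binomial.C (i + j) i)), rsum_scal, hockey_stick;
      [reflexivity|].
    intros i Hi. replace ((-1) ^ m) with ((-1) ^ i * (-1) ^ (m - i)%nat)
      by (rewrite <- pow_add; f_equal; lia). ring.
Qed.

Definition ln_coef (c : R) (m : nat) : R :=
  if Nat.eqb m 0 then 0 else (-1) ^ S m * c ^ m / INR m.

Lemma ln_1p_remainder_derive c k v : 0 < 1 + c * v ->
  is_derive (fun v => ln (1 + c * v) - partial_series (S k) (ln_coef c) v) v
            (c ^ S k * (-1) ^ k * v ^ k / (1 + c * v)).
Proof.
  intros Hv. induction k.
  - unfold partial_series, ln_coef; simpl. auto_derive; [lra | field; lra].
  - unfold partial_series in *.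
    apply (is_derive_ext (fun v => (ln (1 + c * v) - rsum (S k) (fun m => ln_coef c m * v ^ m))
                                   - ln_coef c (S k) * v ^ S k)).
    { intros t. rewrite (rsum_S (S k)). unfold Rminus. rewrite Ropp_plus_distr, Rplus_assoc. reflexivity. }
    replace (c ^ S (S k) * (-1) ^ S k * v ^ S k / (1 + c * v)) with
      (c ^ S k * (-1) ^ k * v ^ k / (1 + c * v)
       - ln_coef c (S k) * (INR (S k) * 1 * v ^ Init.Nat.pred (S k))).
    + apply (is_derive_minus _ (fun v => ln_coef c (S k) * v ^ S k)); auto.
      auto_derive; auto. simpl. ring.
    + unfold ln_coef. simpl Nat.eqb. cbv iota.
      assert (INR (S k) <> 0) by (apply not_0_INR; lia). simpl. field. repeat split; try lra; auto.
Qed.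

Lemma partial_series_ln_coef_0 c K : partial_series K (ln_coef c) 0 = 0.
Proof.
  unfold partial_series. apply rsum_eq0. intros [|i] _; unfold ln_coef; simpl; ring.
Qed.

Lemma ln_1p_remainder_bound c k v : 0 < c -> 0 <= v ->
  Rabs (ln (1 + c * v) - partial_series (S k) (ln_coef c) v) <= c ^ S k * v ^ S k.
Proof.
  intros Hc Hv. destruct (Req_dec v 0) as [->|Hv0].
  { rewrite Rmult_0_r, Rplus_0_r, ln_1, partial_series_ln_coef_0, pow_i by lia.
    rewrite Rminus_0_r, Rabs_R0. lra. }
  destruct (MVT_gen (fun v => ln (1 + c * v) - partial_series (S k) (ln_coef c) v) 0 v
              (fun t => c ^ S k * (-1) ^ k * t ^ k / (1 + c * t))) as (z & Hz & E).
  - intros x Hx. rewrite Rmin_left in Hx by lra. apply ln_1p_remainder_derive. nra.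
  - intros x Hx. rewrite Rmin_left, Rmax_right in Hx by lra.
    apply continuity_pt_filterlim.
    apply (ex_derive_continuous (fun v => ln (1 + c * v) - partial_series (S k) (ln_coef c) v)).
    eexists. apply ln_1p_remainder_derive. nra.
  - rewrite Rmin_left, Rmax_right in Hz by lra.
    rewrite Rmult_0_r, Rplus_0_r, ln_1, partial_series_ln_coef_0, !Rminus_0_r in E.
    rewrite E. unfold Rdiv. rewrite !Rabs_mult, <- !RPow_abs, Rabs_m1, pow1.
    rewrite !Rabs_pos_eq by (try apply Rlt_le, Rinv_0_lt_compat; nra).
    assert (0 <= z ^ k <= v ^ k) by (split; [apply pow_le | apply pow_incr]; lra).
    assert (/ (1 + c * z) <= 1) by (rewrite <- Rinv_1; apply Rinv_le_contravar; nra).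
    assert (0 < / (1 + c * z)) by (apply Rinv_0_lt_compat; nra).
    assert (0 < c ^ S k) by (apply pow_lt; lra).
    replace (c ^ S k * v ^ S k) with (c ^ S k * 1 * v ^ k * 1 * v) by (simpl; ring).
    apply Rmult_le_compat_r; [lra|]. apply Rmult_le_compat; nra.
Qed.

Lemma has_expansion_ln_1p c : 0 < c -> has_expansion (fun v => ln (1 + c * v)) (ln_coef c).
Proof.
  intros Hc [|K].
  - exists c, 1. split; [lra|]. intros v Hv.
    pose proof (ln_1p_remainder_bound c 0 v Hc ltac:(lra)).
    replace (partial_series 0 (ln_coef c) v) with (partial_series 1 (ln_coef c) v)
      by (unfold partial_series, ln_coef; simpl; ring).
    simpl in *. nra.
  - exists (c ^ S K), 1. split; [lra|]. intros v Hv. apply ln_1p_remainder_bound; lra.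
Qed.

Lemma Rabs_le_rsum_pair_sums (e : nat -> R) n m :
  Rabs (e n) <= rsum m (fun i => Rabs (e (n + i)%nat + e (S (n + i)))) + Rabs (e (n + m)%nat).
Proof.
  induction m; simpl; [rewrite Nat.add_0_r; lra|].
  replace (n + S m)%nat with (S (n + m)) by lia.
  assert (Rabs (e (n + m)%nat) <= Rabs (e (n + m)%nat + e (S (n + m))) + Rabs (e (S (n + m)))).
  { replace (e (n + m)%nat) with ((e (n + m)%nat + e (S (n + m))) + - e (S (n + m))) at 1
      by ring.
    eapply Rle_trans; [apply Rabs_triang | rewrite Rabs_Ropp; lra]. }
  lra.
Qed.

Lemma inv_pow_le_telescope n k K : 2 <= n <= k ->
  / k ^ S (S K) <= / n ^ K * (/ (k - 1) - / k).
Proof.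
  intros Hnk.
  replace (/ k ^ S (S K)) with (/ k ^ K * / (k * k))
    by (simpl; field; split; [apply pow_nonzero|]; lra).
  replace (/ (k - 1) - / k) with (/ (k * (k - 1))) by (field; lra).
  apply Rmult_le_compat.
  - apply Rlt_le, Rinv_0_lt_compat, pow_lt; lra.
  - apply Rlt_le, Rinv_0_lt_compat; nra.
  - apply Rinv_le_contravar; [apply pow_lt; lra | apply pow_incr; lra].
  - apply Rinv_le_contravar; nra.
Qed.

Lemma rsum_inv_pow_le n K m : (2 <= n)%nat ->
  rsum m (fun i => / INR (n + i) ^ S (S K)) <= 2 / INR n ^ S K.
Proof.
  intros Hn. assert (H2 : 2 <= INR n) by (apply (le_INR 2); lia).
  set (u := fun j => / (INR (n + j) - 1)).
  eapply Rle_trans; [apply (rsum_le _ _ (fun i => / INR n ^ K * (u i - u (S i))))|].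
  - intros i _. unfold u. replace (n + S i)%nat with (S (n + i)) by lia.
    rewrite S_INR. replace (INR (n + i) + 1 - 1) with (INR (n + i)) by ring.
    apply inv_pow_le_telescope. split; [|apply le_INR]; lia || lra.
  - rewrite rsum_scal, rsum_telescope. unfold u. rewrite Nat.add_0_r.
    assert (INR n <= INR (n + m)) by (apply le_INR; lia).
    assert (0 <= / (INR (n + m) - 1)) by (apply Rlt_le, Rinv_0_lt_compat; lra).
    assert (/ (INR n - 1) <= 2 / INR n)
      by (apply Rmult_le_reg_r with ((INR n - 1) * INR n); [nra | field_simplify; lra]).
    assert (0 < / INR n ^ K) by (apply Rinv_0_lt_compat, pow_lt; lra).
    replace (2 / INR n ^ S K) with (/ INR n ^ K * (2 / INR n))
      by (simpl; field; split; [apply pow_nonzero|]; lra).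
    apply Rmult_le_compat_l; lra.
Qed.

(* [e n] is the alternating sum of the pair sums [e (n+i) + e (n+i+1)]. *)
Lemma alternating_tail_bound (e : nat -> R) C K M : (2 <= M)%nat -> Un_cv e 0 ->
  (forall n, (M <= n)%nat -> Rabs (e n + e (S n)) <= C / INR n ^ S (S K)) ->
  forall n, (M <= n)%nat -> Rabs (e n) <= 2 * C / INR n ^ S K.
Proof.
  intros HM He HC n Hn.
  assert (Hn2 : 2 <= INR n) by (apply (le_INR 2); lia).
  assert (HC0 : 0 <= C).
  { specialize (HC n Hn). pose proof (Rabs_pos (e n + e (S n))).
    assert (0 < INR n ^ S (S K)) by (apply pow_lt; lra).
    apply Rmult_le_reg_r with (/ INR n ^ S (S K)); [apply Rinv_0_lt_compat; lra|].
    rewrite Rmult_0_l. unfold Rdiv in HC. lra. }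
  assert (Hm : forall m, Rabs (e n) <= 2 * C / INR n ^ S K + Rabs (e (n + m)%nat)).
  { intros m. eapply Rle_trans; [apply Rabs_le_rsum_pair_sums|].
    apply Rplus_le_compat_r.
    eapply Rle_trans; [apply (rsum_le _ _ (fun i => C * / INR (n + i) ^ S (S K)))|].
    - intros i _. apply HC. lia.
    - rewrite rsum_scal. replace (2 * C / INR n ^ S K) with (C * (2 / INR n ^ S K)) by lra.
      apply Rmult_le_compat_l; auto. apply rsum_inv_pow_le; lia. }
  apply Rnot_lt_le. intros Hlt.
  destruct (He (Rabs (e n) - 2 * C / INR n ^ S K) ltac:(lra)) as [N HN].
  specialize (HN (n + N)%nat ltac:(lia)). specialize (Hm N).
  unfold R_dist in HN. rewrite Rminus_0_r in HN. lra.
Qed.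

Lemma Un_cv_0_of_le_inv (e : nat -> R) A :
  (forall n, (1 <= n)%nat -> Rabs (e n) <= A / INR n) -> Un_cv e 0.
Proof.
  intros HA eps Heps.
  destruct (archimed_cor1 (eps / (Rabs A + 1))) as (N & HN & HN0).
  { apply Rdiv_lt_0_compat; [lra | pose proof (Rabs_pos A); lra]. }
  exists N. intros n Hn. unfold R_dist. rewrite Rminus_0_r.
  assert (HNn : INR N <= INR n) by (apply le_INR; lia).
  assert (0 < INR N) by (apply lt_0_INR; lia).
  eapply Rle_lt_trans; [apply HA; lia|].
  apply Rle_lt_trans with (Rabs A * / INR N).
  - unfold Rdiv. apply Rmult_le_compat; [| |apply RRle_abs|apply Rinv_le_contravar; lra].
    + pose proof (HA n ltac:(lia)). pose proof (Rabs_pos (e n)).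
      assert (0 < / INR n) by (apply Rinv_0_lt_compat; lra).
      apply Rmult_le_reg_r with (/ INR n); [lra|]. nra.
    + apply Rlt_le, Rinv_0_lt_compat; lra.
  - pose proof (Rabs_pos A).
    apply Rle_lt_trans with (Rabs A * (eps / (Rabs A + 1))); [apply Rmult_le_compat_l; lra|].
    apply Rmult_lt_reg_r with (Rabs A + 1); [lra|].
    replace (Rabs A * (eps / (Rabs A + 1)) * (Rabs A + 1)) with (Rabs A * eps) by (field; lra).
    nra.
Qed.

Definition euler_integrand (x t : R) : R := Rpower t (x - 1) * exp (- t).

Definition zero_infty : (R * R -> Prop) -> Prop :=
  filter_prod (at_right 0) (Rbar_locally p_infty).

Lemma Gamma_RInt_gen x :
  Gamma x = RInt_gen (euler_integrand x) (at_right 0) (Rbar_locally p_infty).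
Proof. reflexivity. Qed.

Lemma exp_le_compat x y : x <= y -> exp x <= exp y.
Proof. intros [H|H]; [left; apply exp_increasing; auto | subst; lra]. Qed.

Lemma ln_le_sub_1 u : 0 < u -> ln u <= u - 1.
Proof. intros Hu. pose proof (exp_ineq1_le (ln u)). rewrite exp_ln in H; lra. Qed.

Lemma Rpower_pos b x : 0 < Rpower b x.
Proof. apply exp_pos. Qed.

Lemma Rpower_le_1 t y : 0 <= y -> 0 < t <= 1 -> Rpower t y <= 1.
Proof.
  intros Hy Ht. unfold Rpower. rewrite <- exp_0. apply exp_le_compat.
  assert (ln t <= 0) by (rewrite <- ln_1; apply ln_le; lra). nra.
Qed.

Lemma Rpower_le_self t y : 1 <= y -> 0 < t <= 1 -> Rpower t y <= t.
Proof.
  intros Hy Ht. replace y with (1 + (y - 1)) by ring.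
  rewrite Rpower_plus, Rpower_1 by lra.
  pose proof (Rpower_le_1 t (y - 1) ltac:(lra) Ht).
  pose proof (Rpower_pos t (y - 1)). nra.
Qed.

Lemma power_exp_derive y t : 0 < t ->
  is_derive (fun u => Rpower u y * exp (- u)) t
            (y * Rpower t (y - 1) * exp (- t) - Rpower t y * exp (- t)).
Proof.
  intros Ht.
  replace (y * Rpower t (y - 1) * exp (- t) - Rpower t y * exp (- t)) with
    (y * Rpower t (y - 1) * exp (- t) + Rpower t y * (- exp (- t))) by ring.
  apply (is_derive_mult (fun u => Rpower u y) (fun u => exp (- u)));
    [apply is_derive_Reals, derivable_pt_lim_power; auto | auto_derive; auto; ring |
     intros; apply Rmult_comm].
Qed.

Lemma power_exp_continuous y t : 0 < t -> continuous (fun u => Rpower u y * exp (- u)) t.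
Proof.
  intros Ht. apply (ex_derive_continuous (fun u => Rpower u y * exp (- u))).
  eexists. apply power_exp_derive; auto.
Qed.

Lemma power_exp_pos y t : 0 < Rpower t y * exp (- t).
Proof. apply Rmult_lt_0_compat; [apply Rpower_pos | apply exp_pos]. Qed.

(* [t^y e^-t <= (m/e)^m / t^2] with [m = y + 2], from [ln u <= u - 1] at [u = t/m]. *)
Lemma power_exp_le_inv_sq y : 0 <= y ->
  exists D, 0 < D /\ forall t, 1 <= t -> Rpower t y * exp (- t) <= D / t ^ 2.
Proof.
  intros Hy. set (m := y + 2). exists (exp (m * ln m - m)). split; [apply exp_pos|].
  intros t Ht. assert (Hm : 0 < m) by (unfold m; lra).
  replace (exp (m * ln m - m) / t ^ 2) with (exp (m * ln m - m - 2 * ln t)).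
  - unfold Rpower. rewrite <- exp_plus. apply exp_le_compat.
    pose proof (ln_le_sub_1 (t / m) ltac:(apply Rdiv_lt_0_compat; lra)) as Hl.
    rewrite ln_div in Hl by lra.
    assert (m * (ln t - ln m) <= t - m).
    { replace (t - m) with (m * (t / m - 1)) by (field; lra). apply Rmult_le_compat_l; lra. }
    unfold m in *. nra.
  - rewrite Rminus_def with (r2 := 2 * ln t), exp_plus, exp_Ropp.
    replace (2 * ln t) with (ln (t ^ 2)) by (rewrite ln_pow by lra; simpl; ring).
    rewrite exp_ln by (apply pow_lt; lra). reflexivity.
Qed.

Lemma euler_integrand_pos x t : 0 < euler_integrand x t.
Proof. apply power_exp_pos. Qed.

Lemma euler_integrand_continuous x t : 0 < t -> continuous (euler_integrand x) t.
Proof. apply power_exp_continuous. Qed.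

Lemma euler_integrand_le_1 x t : 1 <= x -> 0 < t <= 1 -> euler_integrand x t <= 1.
Proof.
  intros Hx Ht. unfold euler_integrand.
  pose proof (Rpower_le_1 t (x - 1) ltac:(lra) Ht).
  assert (exp (- t) <= 1) by (rewrite <- exp_0; apply exp_le_compat; lra).
  pose proof (exp_pos (- t)). pose proof (Rpower_pos t (x - 1)). nra.
Qed.

Lemma ex_RInt_euler_integrand x a b : 0 < a -> 0 < b -> ex_RInt (euler_integrand x) a b.
Proof.
  intros Ha Hb. apply (@ex_RInt_continuous R_CompleteNormedModule). intros z Hz.
  apply euler_integrand_continuous.
  assert (0 < Rmin a b) by (apply Rmin_glb_lt; auto). lra.
Qed.

Lemma at_right_0_below d : 0 < d -> at_right 0 (fun a => a < d).
Proof.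
  intros Hd. exists (mkposreal d Hd). intros y Hy Hy0.
  assert (H : Rabs (y - 0) < d) by exact Hy.
  rewrite Rminus_0_r, Rabs_pos_eq in H by lra. auto.
Qed.

Lemma at_right_0_pos : at_right 0 (fun a => 0 < a).
Proof. exists (mkposreal 1 Rlt_0_1). intros; auto. Qed.

Lemma p_infty_above B : Rbar_locally p_infty (fun b => B < b).
Proof. exists B. auto. Qed.

Lemma zero_infty_pos : zero_infty (fun ab => 0 < fst ab /\ 0 < snd ab).
Proof.
  apply Filter_prod with (fun a => 0 < a) (fun b => 0 < b);
    auto using at_right_0_pos, p_infty_above.
Qed.

Lemma Rabs_RInt_swap (f : R -> R) a b : ex_RInt f a b -> Rabs (RInt f b a) = Rabs (RInt f a b).
Proof. intros H. rewrite <- opp_RInt_swap by auto. apply Rabs_Ropp. Qed.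

Lemma Rabs_RInt_euler_near_0 x a a' : 1 <= x -> 0 < a <= 1 -> 0 < a' <= 1 ->
  Rabs (RInt (euler_integrand x) a a') <= Rabs (a' - a).
Proof.
  intros Hx Ha Ha'.
  assert (Hle : forall a a', 0 < a <= a' -> a' <= 1 ->
            Rabs (RInt (euler_integrand x) a a') <= Rabs (a' - a)).
  { intros u u' Hu Hu'. rewrite (Rabs_pos_eq (u' - u)) by lra.
    rewrite <- (Rmult_1_r (u' - u)). apply abs_RInt_le_const; [lra | |].
    - apply ex_RInt_euler_integrand; lra.
    - intros t Ht. pose proof (euler_integrand_pos x t).
      rewrite Rabs_pos_eq by lra. apply euler_integrand_le_1; lra. }
  destruct (Rle_or_lt a a'); [apply Hle; lra|].
  rewrite Rabs_RInt_swap, Rabs_minus_sym by (apply ex_RInt_euler_integrand; lra).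
  apply Hle; lra.
Qed.

Lemma RInt_inv_sq D b b' : 0 < b -> 0 < b' -> RInt (fun t => D / t ^ 2) b b' = D / b - D / b'.
Proof.
  intros Hb Hb'. assert (0 < Rmin b b') by (apply Rmin_glb_lt; auto).
  apply is_RInt_unique.
  replace (D / b - D / b') with (minus ((fun t => - D / t) b') ((fun t => - D / t) b))
    by (unfold minus, plus, opp; simpl; field; lra).
  apply (@is_RInt_derive R_CompleteNormedModule (fun t => - D / t)).
  - intros t Ht. auto_derive; [lra | field; lra].
  - intros t Ht. apply (ex_derive_continuous (fun t => D / t ^ 2)).
    auto_derive. apply Rgt_not_eq. nra.
Qed.

Lemma Rabs_RInt_euler_tail x D b b' : 0 < D ->
  (forall t, 1 <= t -> euler_integrand x t <= D / t ^ 2) -> 1 <= b -> 1 <= b' ->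
  Rabs (RInt (euler_integrand x) b b') <= D / Rmin b b'.
Proof.
  intros HD0 HD Hb Hb'.
  assert (Hle : forall b b', 1 <= b <= b' -> Rabs (RInt (euler_integrand x) b b') <= D / b).
  { intros u u' Hu. assert (0 < D / u') by (apply Rdiv_lt_0_compat; lra).
    rewrite Rabs_pos_eq.
    - pose proof (RInt_inv_sq D u u' ltac:(lra) ltac:(lra)).
      apply Rle_trans with (RInt (fun t => D / t ^ 2) u u'); [|lra].
      apply RInt_le; [lra | apply ex_RInt_euler_integrand; lra | |].
      + apply (@ex_RInt_continuous R_CompleteNormedModule). intros z Hz.
        rewrite Rmin_left, Rmax_right in Hz by lra.
        apply (ex_derive_continuous (fun t => D / t ^ 2)). auto_derive.
        apply Rgt_not_eq; nra.
      + intros t Ht. apply HD. lra.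
    - apply RInt_ge_0; [lra | apply ex_RInt_euler_integrand; lra |].
      intros t _. apply Rlt_le, euler_integrand_pos. }
  destruct (Rle_or_lt b b').
  - rewrite Rmin_left by lra. apply Hle; lra.
  - rewrite Rmin_right, Rabs_RInt_swap by (try apply ex_RInt_euler_integrand; lra).
    apply Hle; lra.
Qed.

Lemma zero_infty_proper : ProperFilter zero_infty.
Proof. apply filter_prod_proper. Qed.

Lemma RInt_euler_cauchy x : 1 <= x ->
  exists l, filterlim (fun ab => RInt (euler_integrand x) (fst ab) (snd ab)) zero_infty (locally l).
Proof.
  intros Hx. destruct (power_exp_le_inv_sq (x - 1) ltac:(lra)) as (D & HD0 & HD).
  apply (proj1 (filterlim_locally_cauchy (F := zero_infty) _)). intros eps.
  pose proof (cond_pos eps) as He.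
  set (d := Rmin 1 (eps / 2)). set (B := Rmax 1 (2 * D / eps)).
  assert (0 < d <= 1 /\ d <= eps / 2)
    by (unfold d; repeat split; [apply Rmin_glb_lt; lra | apply Rmin_l | apply Rmin_r]).
  assert (1 <= B /\ 2 * D / eps <= B) by (unfold B; split; [apply Rmax_l | apply Rmax_r]).
  exists (fun ab => (0 < fst ab /\ fst ab < d) /\ B < snd ab). split.
  { apply Filter_prod with (fun a => 0 < a /\ a < d) (fun b => B < b); auto.
    - apply filter_and; [apply at_right_0_pos | apply at_right_0_below; lra].
    - apply p_infty_above. }
  intros [a b] [a' b'] [Ha Hb] [Ha' Hb']. simpl in *.
  change (Rabs (RInt (euler_integrand x) a' b' - RInt (euler_integrand x) a b) < eps).
  rewrite <- (RInt_Chasles (euler_integrand x) a' b b'), <- (RInt_Chasles (euler_integrand x) a' a b)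
    by (apply ex_RInt_euler_integrand; lra).
  replace (plus (plus _ _) _ - _) with
    (RInt (euler_integrand x) a' a + RInt (euler_integrand x) b b')
    by (unfold plus; simpl; ring).
  assert (Rabs (RInt (euler_integrand x) a' a) < eps / 2).
  { eapply Rle_lt_trans; [apply Rabs_RInt_euler_near_0; lra | apply Rabs_def1; lra]. }
  assert (Rabs (RInt (euler_integrand x) b b') < eps / 2).
  { eapply Rle_lt_trans; [apply (Rabs_RInt_euler_tail x D); auto; lra|].
    assert (B < Rmin b b') by (apply Rmin_glb_lt; lra).
    apply Rmult_lt_reg_r with (Rmin b b'); [lra|]. unfold Rdiv.
    rewrite Rmult_assoc, Rinv_l by lra.
    assert (2 * D / eps * eps = 2 * D) by (field; lra). nra. }
  eapply Rle_lt_trans; [apply Rabs_triang | lra].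
Qed.

Lemma Gamma_lim x : 1 <= x ->
  filterlim (fun ab => RInt (euler_integrand x) (fst ab) (snd ab)) zero_infty (locally (Gamma x)).
Proof.
  intros Hx. destruct (RInt_euler_cauchy x Hx) as [l Hl].
  replace (Gamma x) with l; auto.
  rewrite Gamma_RInt_gen. symmetry. apply is_RInt_gen_unique.
  apply (filterlimi_lim_ext_loc (fun ab => RInt (euler_integrand x) (fst ab) (snd ab))); auto.
  eapply filter_imp; [|apply zero_infty_pos]. intros [a b] [Ha Hb].
  apply (@RInt_correct R_CompleteNormedModule), ex_RInt_euler_integrand; auto.
Qed.

Lemma is_RInt_gen_Gamma x : 1 <= x ->
  is_RInt_gen (euler_integrand x) (at_right 0) (Rbar_locally p_infty) (Gamma x).
Proof.
  intros Hx. apply (filterlimi_lim_ext_loc (fun ab => RInt (euler_integrand x) (fst ab) (snd ab))).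
  - eapply filter_imp; [|apply zero_infty_pos]. intros [a b] [Ha Hb].
    apply (@RInt_correct R_CompleteNormedModule), ex_RInt_euler_integrand; auto.
  - apply Gamma_lim; auto.
Qed.

Lemma Gamma_pos x : 1 <= x -> 0 < Gamma x.
Proof.
  intros Hx.
  assert (H12 : 0 < RInt (euler_integrand x) 1 2).
  { apply RInt_gt_0; [lra | intros; apply euler_integrand_pos |].
    intros; apply euler_integrand_continuous; lra. }
  apply Rlt_le_trans with (RInt (euler_integrand x) 1 2); auto.
  change (Rbar_le (RInt (euler_integrand x) 1 2) (Gamma x)).
  apply (@filterlim_le _ zero_infty (Proper_StrongProper _ zero_infty_proper)
           (fun _ => RInt (euler_integrand x) 1 2)
           (fun ab => RInt (euler_integrand x) (fst ab) (snd ab))).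
  - apply Filter_prod with (fun a => 0 < a /\ a < 1) (fun b => 2 < b).
    + apply filter_and; [apply at_right_0_pos | apply at_right_0_below; lra].
    + apply p_infty_above.
    + intros a b Ha Hb. simpl.
      rewrite <- (RInt_Chasles (euler_integrand x) a 2 b), <- (RInt_Chasles (euler_integrand x) a 1 2)
        by (apply ex_RInt_euler_integrand; lra).
      assert (0 <= RInt (euler_integrand x) a 1 /\ 0 <= RInt (euler_integrand x) 2 b) as [].
      { split; apply RInt_ge_0; try lra; try apply ex_RInt_euler_integrand; try lra;
          intros; apply Rlt_le, euler_integrand_pos. }
      unfold plus; simpl. lra.
  - apply filterlim_const.
  - apply Gamma_lim; auto.
Qed.

Lemma power_exp_lim_0 y : 1 <= y ->
  filterlim (fun t => Rpower t y * exp (- t)) (at_right 0) (locally 0).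
Proof.
  intros Hy. apply filterlim_locally. intros eps. pose proof (cond_pos eps).
  eapply filter_imp;
    [|apply (filter_and _ _ at_right_0_pos (at_right_0_below (Rmin 1 eps) ltac:(apply Rmin_glb_lt; lra)))].
  intros t [Ht1 Ht2]. change (Rabs (Rpower t y * exp (- t) - 0) < eps).
  pose proof (Rmin_l 1 eps). pose proof (Rmin_r 1 eps).
  pose proof (power_exp_pos y t). rewrite Rminus_0_r, Rabs_pos_eq by lra.
  pose proof (Rpower_le_self t y Hy ltac:(lra)).
  assert (exp (- t) <= 1) by (rewrite <- exp_0; apply exp_le_compat; lra).
  pose proof (Rpower_pos t y). nra.
Qed.

Lemma power_exp_lim_p_infty y : 0 <= y ->
  filterlim (fun t => Rpower t y * exp (- t)) (Rbar_locally p_infty) (locally 0).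
Proof.
  intros Hy. destruct (power_exp_le_inv_sq y Hy) as (D & HD0 & HD).
  apply filterlim_locally. intros eps. pose proof (cond_pos eps).
  eapply filter_imp; [|apply (p_infty_above (Rmax 1 (D / eps)))].
  intros t Ht. change (Rabs (Rpower t y * exp (- t) - 0) < eps).
  pose proof (Rmax_l 1 (D / eps)). pose proof (Rmax_r 1 (D / eps)).
  pose proof (power_exp_pos y t). rewrite Rminus_0_r, Rabs_pos_eq by lra.
  eapply Rle_lt_trans; [apply HD; lra|].
  apply Rmult_lt_reg_r with (t ^ 2); [apply pow_lt; lra|].
  unfold Rdiv. rewrite Rmult_assoc, Rinv_l by (apply pow_nonzero; lra).
  assert (D / eps * eps = D) by (field; lra).
  assert (eps * t > D) by nra. assert (eps * t * t >= eps * t) by nra. simpl. nra.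
Qed.

Lemma filterlim_Ropp_0 {T} (F : (T -> Prop) -> Prop) {FF : Filter F} (f : T -> R) :
  filterlim f F (locally 0) -> filterlim (fun t => - f t) F (locally 0).
Proof.
  intros H. pose proof (filterlim_comp _ _ _ f opp F _ _ H (filterlim_opp 0)) as Hc.
  change (opp 0) with (- 0) in Hc. rewrite Ropp_0 in Hc. exact Hc.
Qed.

(* Integration by parts: [-t^x e^-t] is a primitive of [t^x e^-t - x t^(x-1) e^-t]. *)
Lemma is_RInt_gen_Gamma_succ_defect x : 1 <= x ->
  is_RInt_gen (fun t => euler_integrand (x + 1) t - x * euler_integrand x t)
              (at_right 0) (Rbar_locally p_infty) 0.
Proof.
  intros Hx. set (h := fun t => - (Rpower t x * exp (- t))).
  set (dh := fun t => euler_integrand (x + 1) t - x * euler_integrand x t).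
  assert (Hdh : forall t, 0 < t -> is_derive h t (dh t)).
  { intros t Ht. unfold h, dh, euler_integrand. replace (x + 1 - 1) with x by ring.
    replace (Rpower t x * exp (- t) - x * (Rpower t (x - 1) * exp (- t))) with
      (- (x * Rpower t (x - 1) * exp (- t) - Rpower t x * exp (- t))) by ring.
    apply (is_derive_opp (fun t => Rpower t x * exp (- t))), power_exp_derive; auto. }
  assert (Hpos : zero_infty (fun ab => forall t, Rmin (fst ab) (snd ab) <= t <= Rmax (fst ab) (snd ab) -> 0 < t)).
  { eapply filter_imp; [|apply zero_infty_pos]. intros [a b] [Ha Hb] t Ht. simpl in *.
    assert (0 < Rmin a b) by (apply Rmin_glb_lt; auto). lra. }
  apply (is_RInt_gen_ext (Derive h)).
  { eapply filter_imp; [|apply Hpos]. intros ab Hab t Ht.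
    apply is_derive_unique, Hdh, Hab. split; apply Rlt_le, Ht. }
  enough (HI : is_RInt_gen (Derive h) (at_right 0) (Rbar_locally p_infty) (0 - 0))
    by (rewrite Rminus_0_r in HI; exact HI).
  apply is_RInt_gen_Derive.
  - eapply filter_imp; [|apply Hpos]. intros ab Hab t Ht. eexists. apply Hdh, Hab, Ht.
  - eapply filter_imp; [|apply Hpos]. intros ab Hab t Ht. pose proof (Hab t Ht) as Ht0.
    apply (continuous_ext_loc _ dh).
    + exists (mkposreal t Ht0). intros u Hu. change (Rabs (u - t) < t) in Hu.
      apply Rabs_def2 in Hu. symmetry. apply is_derive_unique, Hdh. lra.
    + apply (continuous_minus (euler_integrand (x + 1)) (fun t => x * euler_integrand x t)).
      * apply euler_integrand_continuous; auto.
      * apply (continuous_scal_r x (euler_integrand x)), euler_integrand_continuous; auto.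
  - exact (filterlim_Ropp_0 (at_right 0) _ (power_exp_lim_0 x Hx)).
  - exact (filterlim_Ropp_0 (Rbar_locally p_infty) _ (power_exp_lim_p_infty x ltac:(lra))).
Qed.

Lemma Gamma_succ x : 1 <= x -> Gamma (x + 1) = x * Gamma x.
Proof.
  intros Hx.
  pose proof (is_RInt_gen_plus _ _ _ _ (is_RInt_gen_Gamma_succ_defect x Hx)
                (is_RInt_gen_scal _ x _ (is_RInt_gen_Gamma x Hx))) as H.
  rewrite (Gamma_RInt_gen (x + 1)). apply is_RInt_gen_unique.
  replace (x * Gamma x) with (plus 0 (scal x (Gamma x)))
    by (unfold plus, scal; simpl; unfold mult; simpl; ring).
  refine (is_RInt_gen_ext _ (euler_integrand (x + 1)) _ _ H).
  apply filter_forall. intros ab t _. unfold plus, scal; simpl. unfold mult; simpl. ring.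
Qed.

Lemma is_RInt_gen_ge0 (f : R -> R) l : (forall t, 0 < t -> 0 <= f t) ->
  is_RInt_gen f (at_right 0) (Rbar_locally p_infty) l -> 0 <= l.
Proof.
  intros Hf Hl.
  assert (Hle : Rabs l <= l).
  { apply (@RInt_gen_norm R_CompleteNormedModule _ _
             (at_right_proper_filter 0) (Rbar_locally_filter p_infty) f f l l); auto.
    - apply Filter_prod with (fun a => a < 1) (fun b => 1 < b);
        [apply at_right_0_below; lra | apply p_infty_above | intros; simpl; lra].
    - eapply filter_imp; [|apply zero_infty_pos]. intros [a b] [Ha Hb] t Ht. simpl in *.
      change (Rabs (f t) <= f t). rewrite Rabs_pos_eq; [lra | apply Hf; lra]. }
  pose proof (Rabs_pos l). lra.
Qed.

(* [s^2 t^(x-1) + 2 s t^(x-1/2) + t^x = (s t^((x-1)/2) + t^(x/2))^2]. *)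
Lemma euler_integrand_square_nonneg s x t : 0 < t ->
  0 <= s ^ 2 * euler_integrand x t + 2 * s * euler_integrand (x + 1/2) t
       + euler_integrand (x + 1) t.
Proof.
  intros Ht. unfold euler_integrand.
  set (P := Rpower t ((x - 1) / 2)). set (Q := Rpower t (x / 2)).
  replace (x - 1) with ((x - 1) / 2 + (x - 1) / 2) by field.
  replace (x + 1/2 - 1) with ((x - 1) / 2 + x / 2) by field.
  replace (x + 1 - 1) with (x / 2 + x / 2) by field.
  rewrite !Rpower_plus. fold P Q. pose proof (exp_pos (- t)).
  replace (_ + _ + _) with (exp (- t) * (s * P + Q) ^ 2) by ring.
  apply Rmult_le_pos; [lra | apply pow2_ge_0].
Qed.

(* Log-convexity: the quadratic form in [s] is nonnegative, so its discriminant is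
   nonpositive. *)
Lemma Gamma_half_sq_le x : 1 <= x -> Gamma (x + 1/2) ^ 2 <= Gamma x * Gamma (x + 1).
Proof.
  intros Hx.
  assert (Hq : forall s, 0 <= s ^ 2 * Gamma x + 2 * s * Gamma (x + 1/2) + Gamma (x + 1)).
  { intros s. apply (is_RInt_gen_ge0 (fun t => s ^ 2 * euler_integrand x t
        + 2 * s * euler_integrand (x + 1/2) t + euler_integrand (x + 1) t));
      [intros; apply euler_integrand_square_nonneg; auto|].
    pose proof (is_RInt_gen_Gamma x Hx) as H0.
    pose proof (is_RInt_gen_Gamma (x + 1/2) ltac:(lra)) as H1.
    pose proof (is_RInt_gen_Gamma (x + 1) ltac:(lra)) as H2.
    exact (is_RInt_gen_plus _ _ _ _ (is_RInt_gen_plus _ _ _ _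
             (is_RInt_gen_scal _ (s ^ 2) _ H0) (is_RInt_gen_scal _ (2 * s) _ H1)) H2). }
  pose proof (Gamma_pos x Hx) as HG. specialize (Hq (- Gamma (x + 1/2) / Gamma x)).
  replace (_ + _ + _) with ((Gamma x * Gamma (x + 1) - Gamma (x + 1/2) ^ 2) / Gamma x)
    in Hq by (field; lra).
  apply Rmult_le_compat_r with (r := Gamma x) in Hq; [|lra].
  unfold Rdiv in Hq. rewrite Rmult_0_l, Rmult_assoc, Rinv_l in Hq by lra. lra.
Qed.

Lemma C_succ_n n : Binomial.C (S n) n = INR (S n).
Proof.
  unfold Binomial.C. replace (S n - n)%nat with 1%nat by lia.
  rewrite fact_simpl, mult_INR. simpl. field. apply INR_fact_neq_0.
Qed.

Lemma C_succ_1 n : Binomial.C (S n) 1 = INR (S n).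
Proof.
  unfold Binomial.C. replace (S n - 1)%nat with n by lia.
  rewrite fact_simpl, mult_INR. simpl. field. apply INR_fact_neq_0.
Qed.

Lemma C_mul_C_comm M k l : (k + l <= M)%nat ->
  Binomial.C M k * Binomial.C (M - k) l = Binomial.C M (M - l) * Binomial.C (M - l) k.
Proof.
  intros H. unfold Binomial.C. replace (M - (M - l))%nat with l by lia.
  replace (M - k - l)%nat with (M - l - k)%nat by lia.
  pose proof (INR_fact_neq_0 k). pose proof (INR_fact_neq_0 l).
  pose proof (INR_fact_neq_0 (M - k)). pose proof (INR_fact_neq_0 (M - l)).
  pose proof (INR_fact_neq_0 (M - l - k)). field. tauto.
Qed.

Lemma bern_list_length m : length (bern_list m) = S m.
Proof. induction m; simpl; auto. rewrite length_app, IHm. simpl. lia. Qed.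

Lemma bern_list_nth m k : (k <= m)%nat -> nth k (bern_list m) 0 = bernoulli_number k.
Proof.
  intros H. induction H; [reflexivity|].
  simpl. rewrite app_nth1; auto. rewrite bern_list_length; lia.
Qed.

Lemma bernoulli_number_recurrence m : (1 <= m)%nat ->
  rsum (S m) (fun k => Binomial.C (S m) k * bernoulli_number k) = 0.
Proof.
  intros Hm. destruct m as [|m]; [lia|].
  assert (E : bernoulli_number (S m) = - / (INR (S m) + 1) *
                rsum (S m) (fun k => Binomial.C (S (S m)) k * bernoulli_number k)).
  { unfold bernoulli_number at 1. cbn [bern_list].
    rewrite app_nth2 by (rewrite bern_list_length; lia).
    rewrite bern_list_length, Nat.sub_diag, sum_range_rsum. cbn [nth].
    replace (S m + 1)%nat with (S (S m)) by lia. f_equal.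
    apply rsum_ext. intros i Hi. rewrite bern_list_nth by lia. reflexivity. }
  rewrite rsum_S, C_succ_n, E, S_INR. field. pose proof (pos_INR (S m)). lra.
Qed.

Lemma bernoulli_number_0 : bernoulli_number 0 = 1.
Proof. reflexivity. Qed.

Lemma bernoulli_number_1 : bernoulli_number 1 = - / 2.
Proof.
  pose proof (bernoulli_number_recurrence 1 (le_n 1)) as H.
  simpl in H. rewrite bernoulli_number_0 in H. unfold Binomial.C in H. simpl in H. lra.
Qed.

Lemma bernoulli_poly_rsum m x : bernoulli_poly m x =
  rsum (S m) (fun k => Binomial.C m k * bernoulli_number k * x ^ (m - k)).
Proof. unfold bernoulli_poly. rewrite sum_range_rsum. reflexivity. Qed.

Lemma bernoulli_poly_add M x h : bernoulli_poly M (x + h) =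
  rsum (S M) (fun i => Binomial.C M i * bernoulli_poly i x * h ^ (M - i)).
Proof.
  rewrite bernoulli_poly_rsum.
  rewrite (rsum_ext (S M) _ (fun k => rsum (S (M - k)) (fun l => Binomial.C M k *
             bernoulli_number k * Binomial.C (M - k) l * h ^ l * x ^ (M - k - l)))).
  2:{ intros k Hk. rewrite Rplus_comm, binomial, sum_f_R0_rsum, <- rsum_scal.
      apply rsum_ext; intros; ring. }
  rewrite rsum_triangle_swap, rsum_rev. apply rsum_ext. intros l Hl.
  replace (S M - S l)%nat with (M - l)%nat by lia.
  replace (M - (M - l))%nat with l by lia.
  rewrite bernoulli_poly_rsum, Rmult_comm, <- Rmult_assoc, (Rmult_comm (h ^ _)), <- rsum_scal.
  apply rsum_ext. intros k Hk.
  pose proof (C_mul_C_comm M k (M - l) ltac:(lia)) as Hc.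
  replace (M - (M - l))%nat with l in Hc by lia.
  replace (M - k - (M - l))%nat with (l - k)%nat by lia.
  transitivity (Binomial.C M k * Binomial.C (M - k) (M - l) * bernoulli_number k
                * h ^ (M - l) * x ^ (l - k)); [ring|].
  rewrite Hc. ring.
Qed.

Lemma bernoulli_poly_at_1 i :
  bernoulli_poly i 1 = bernoulli_number i + (if Nat.eqb i 1 then 1 else 0).
Proof.
  rewrite bernoulli_poly_rsum. destruct i as [|[|i]].
  - simpl. unfold Binomial.C. simpl. rewrite bernoulli_number_0. field.
  - simpl. unfold Binomial.C. simpl. rewrite bernoulli_number_0, bernoulli_number_1. field.
  - rewrite rsum_S, (rsum_ext _ _ (fun k => Binomial.C (S (S i)) k * bernoulli_number k))
      by (intros; rewrite pow1; ring).
    rewrite bernoulli_number_recurrence by lia. rewrite C_n_n, Nat.sub_diag. simpl. ring.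
Qed.

Lemma bernoulli_poly_succ M x : (1 <= M)%nat ->
  bernoulli_poly M (x + 1) = bernoulli_poly M x + INR M * x ^ (M - 1).
Proof.
  intros HM. rewrite Rplus_comm, bernoulli_poly_add.
  rewrite (rsum_ext _ _ (fun i => Binomial.C M i * bernoulli_number i * x ^ (M - i)
             + Binomial.C M i * (if Nat.eqb i 1 then 1 else 0) * x ^ (M - i)))
    by (intros i _; rewrite bernoulli_poly_at_1; ring).
  rewrite rsum_plus, <- bernoulli_poly_rsum. f_equal.
  rewrite (rsum_single _ 1); [|lia|].
  - destruct M as [|M]; [lia|]. rewrite C_succ_1. simpl. ring.
  - intros i _ Hi. rewrite (proj2 (Nat.eqb_neq i 1) Hi). ring.
Qed.

Definition bern_comb (i : nat) : R :=
  2 * bernoulli_poly i 1 - bernoulli_poly i (1/2) - bernoulli_poly i (3/2).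

Lemma lambda_bern_comb j :
  lambda j = (-1) ^ j * bern_comb (S j) * 2 ^ j / (INR j * (INR j + 1)).
Proof. reflexivity. Qed.

Lemma bern_comb_0 : bern_comb 0 = 0.
Proof. unfold bern_comb. rewrite !bernoulli_poly_rsum. simpl. ring. Qed.

Lemma bern_comb_1 : bern_comb 1 = 0.
Proof.
  unfold bern_comb. rewrite !bernoulli_poly_rsum. unfold Binomial.C. simpl.
  rewrite bernoulli_number_0, bernoulli_number_1. field.
Qed.

(* Shift each of the three Bernoulli polynomials in [bern_comb] by [1/2]. *)
Lemma rsum_bern_comb M :
  rsum (S M) (fun i => Binomial.C M i * bern_comb i * (1/2) ^ (M - i)) =
  2 * bernoulli_poly M (3/2) - bernoulli_poly M 1 - bernoulli_poly M 2.
Proof.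
  replace (bernoulli_poly M (3/2)) with (bernoulli_poly M (1 + 1/2)) by (f_equal; field).
  replace (bernoulli_poly M 1) with (bernoulli_poly M (1/2 + 1/2)) by (f_equal; field).
  replace (bernoulli_poly M 2) with (bernoulli_poly M (3/2 + 1/2)) by (f_equal; field).
  rewrite !bernoulli_poly_add, <- !rsum_scal, <- !rsum_minus.
  apply rsum_ext. intros i _. unfold bern_comb. ring.
Qed.

Lemma lambda_mul_C p j : (j <= p)%nat ->
  lambda (S j) * ((-1) ^ (p - j) * Binomial.C (p - j + j) (p - j)) =
  (-1) ^ S p * 2 ^ S p / (INR (S p) * INR (S (S p))) *
  (Binomial.C (S (S p)) (S (S j)) * bern_comb (S (S j)) * (1/2) ^ (p - j)).
Proof.
  intros H. rewrite lambda_bern_comb. remember (p - j)%nat as q.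
  replace p with (j + q)%nat by lia. unfold Binomial.C.
  replace (q + j - q)%nat with j by lia.
  replace (S (S (j + q)) - S (S j))%nat with q by lia.
  replace (q + j)%nat with (j + q)%nat by lia.
  rewrite !fact_simpl, !mult_INR.
  replace ((-1) ^ S (j + q)) with ((-1) ^ S j * (-1) ^ q) by (rewrite <- pow_add; f_equal).
  replace (2 ^ S (j + q)) with (2 ^ S j * 2 ^ q) by (rewrite <- pow_add; f_equal).
  assert (2 ^ q <> 0) by (apply pow_nonzero; lra).
  replace ((1/2) ^ q) with (/ 2 ^ q) by (unfold Rdiv; rewrite Rmult_1_l, pow_inv; reflexivity).
  pose proof (INR_fact_neq_0 j). pose proof (INR_fact_neq_0 q).
  pose proof (INR_fact_neq_0 (j + q)). pose proof (pos_INR j). pose proof (pos_INR (j + q)).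
  rewrite !S_INR, plus_INR in *. field. repeat split; try lra; auto.
Qed.

(* The coefficient of [v^(p+1)] in the [lambda] part of [pair_defect] below; the identity
   reduces to [B_m(x+1) - B_m(x) = m x^(m-1)] at [x = 1/2] and [x = 1]. *)
Lemma lambda_coef_identity p :
  lambda (S p) + rsum (S p) (fun j => lambda (S j) *
                    ((-1) ^ (p - j) * Binomial.C (p - j + j) (p - j)))
  = ln_coef 2 (S p) - ln_coef 1 (S p).
Proof.
  set (K := (-1) ^ S p * 2 ^ S p / (INR (S p) * INR (S (S p)))).
  rewrite (rsum_ext _ _ (fun j => K * (Binomial.C (S (S p)) (S (S j)) *
             bern_comb (S (S j)) * (1/2) ^ (S (S p) - S (S j)))))
    by (intros j Hj; rewrite lambda_mul_C by lia; reflexivity).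
  pose proof (rsum_bern_comb (S (S p))) as HA.
  rewrite 2!rsum_shift, bern_comb_0, bern_comb_1 in HA.
  rewrite rsum_scal, lambda_bern_comb.
  replace (rsum (S p) _) with
    (2 * bernoulli_poly (S (S p)) (3/2) - bernoulli_poly (S (S p)) 1
     - bernoulli_poly (S (S p)) 2) by (rewrite <- HA; ring).
  pose proof (bernoulli_poly_succ (S (S p)) (1/2) ltac:(lia)) as D1.
  pose proof (bernoulli_poly_succ (S (S p)) 1 ltac:(lia)) as D2.
  replace (1/2 + 1) with (3/2) in D1 by field. replace (1 + 1) with 2 in D2 by field.
  unfold bern_comb, ln_coef, K. rewrite D1, D2, !pow1. simpl (S (S p) - 1)%nat. cbv iota.
  replace ((1/2) ^ S p) with (/ 2 ^ S p) by (unfold Rdiv; rewrite Rmult_1_l, pow_inv; reflexivity).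
  assert (2 ^ S p <> 0) by (apply pow_nonzero; lra).
  rewrite !S_INR. pose proof (pos_INR p). simpl Nat.eqb. cbv iota.
  replace ((-1) ^ S (S p)) with (- (-1) ^ S p) by (simpl; ring).
  field. lra.
Qed.

Definition lambda_sum (N n : nat) : R := sum_range 1 N (fun j => lambda j / INR n ^ j).

Lemma lambda_sum_rsum N n :
  lambda_sum N n = rsum N (fun i => lambda (S i) / INR n ^ S i).
Proof. unfold lambda_sum. rewrite sum_range_rsum. reflexivity. Qed.

Definition pair_defect (N : nat) (v : R) : R :=
  rsum N (fun j => lambda (S j) * (v ^ S j + v ^ S j * (/ (1 + v)) ^ S j))
  - (ln (1 + 2 * v) - ln (1 + 1 * v)).

Definition pair_defect_coef (N m : nat) : R :=
  rsum N (fun j => lambda (S j) * (kdelta (S j) m +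
    cauchy_prod (kdelta (S j)) (fun q => (-1) ^ q * Binomial.C (q + j) q) m))
  - (ln_coef 2 m - ln_coef 1 m).

Lemma has_expansion_pair_defect N : has_expansion (pair_defect N) (pair_defect_coef N).
Proof.
  apply has_expansion_minus; [|apply has_expansion_minus; apply has_expansion_ln_1p; lra].
  apply has_expansion_rsum. intros j _. apply has_expansion_scal, has_expansion_plus;
    [apply has_expansion_pow |
     apply has_expansion_mult; [apply has_expansion_pow | apply has_expansion_inv_1p_pow]].
Qed.

Lemma pair_defect_coef_vanish N m : (m <= N)%nat -> pair_defect_coef N m = 0.
Proof.
  intros Hm. unfold pair_defect_coef. destruct m as [|p].
  { rewrite rsum_eq0; [unfold ln_coef; simpl; ring|].
    intros j _. rewrite cauchy_prod_kdelta. unfold kdelta. simpl. ring. }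
  rewrite <- (lambda_coef_identity p).
  rewrite (rsum_ext _ _ (fun j => lambda (S j) * kdelta (S j) (S p) +
             (if Nat.leb (S j) (S p) then lambda (S j) *
                ((-1) ^ (S p - S j) * Binomial.C (S p - S j + j) (S p - S j)) else 0)))
    by (intros j _; rewrite cauchy_prod_kdelta; destruct (Nat.leb (S j) (S p)); ring).
  rewrite rsum_plus, (rsum_single N p); [|lia|].
  2:{ intros i _ Hi. unfold kdelta. rewrite (proj2 (Nat.eqb_neq (S p) (S i))) by lia. ring. }
  rewrite (rsum_pad (S p) N); [|lia|].
  2:{ intros i Hi. rewrite (proj2 (Nat.leb_gt (S i) (S p))) by lia. reflexivity. }
  unfold kdelta. rewrite Nat.eqb_refl, Rmult_1_r, Rminus_diag_eq; [reflexivity|].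
  f_equal. apply rsum_ext. intros j Hj.
  rewrite (proj2 (Nat.leb_le (S j) (S p))) by lia. reflexivity.
Qed.

Lemma pair_defect_at_inv n N : (1 <= n)%nat ->
  pair_defect N (/ INR n) = lambda_sum N n + lambda_sum N (S n) - (ln (INR n + 2) - ln (INR n + 1)).
Proof.
  intros Hn. assert (0 < INR n) by (apply lt_0_INR; lia).
  unfold pair_defect. rewrite !lambda_sum_rsum, <- rsum_plus. f_equal.
  - apply rsum_ext. intros i _. rewrite S_INR, <- Rpow_mult_distr, !pow_inv.
    replace (/ INR n * / (1 + / INR n)) with (/ (INR n + 1)) by (field; lra).
    rewrite pow_inv. field. split; apply pow_nonzero; lra.
  - replace (1 + 2 * / INR n) with ((INR n + 2) / INR n) by (field; lra).
    replace (1 + 1 * / INR n) with ((INR n + 1) / INR n) by (field; lra).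
    rewrite !ln_div by lra. ring.
Qed.

Lemma lambda_sum_pair_bound N : exists C M, (1 <= M)%nat /\ forall n, (M <= n)%nat ->
  Rabs (lambda_sum N n + lambda_sum N (S n) - (ln (INR n + 2) - ln (INR n + 1)))
  <= C / INR n ^ S N.
Proof.
  destruct (has_expansion_vanishing _ _ (S N) (has_expansion_pair_defect N)
              (fun m Hm => pair_defect_coef_vanish N m ltac:(lia))) as (C & d & Hd & HC).
  destruct (archimed_cor1 d ltac:(lra)) as (M & HMd & HM).
  exists C, M. split; [lia|]. intros n Hn.
  assert (0 < INR n) by (apply lt_0_INR; lia).
  assert (INR M <= INR n) by (apply le_INR; lia).
  assert (Hv : 0 < / INR n <= d).
  { split; [apply Rinv_0_lt_compat; lra|].
    apply Rlt_le. eapply Rle_lt_trans; [|apply HMd]. apply Rinv_le_contravar; auto.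
    apply lt_0_INR; lia. }
  rewrite <- pair_defect_at_inv by lia.
  replace (C / INR n ^ S N) with (C * (/ INR n) ^ S N)
    by (rewrite pow_inv; field; apply pow_nonzero; lra).
  apply HC; auto.
Qed.

Definition gamma_ratio (y : R) : R := Gamma y * Gamma (y + 1) / Gamma (y + 1/2) ^ 2.

Definition omega_log_ratio (n : nat) : R :=
  ln (Omega n ^ 2 / (Omega (n - 1) * Omega (n + 1))).

Lemma omega_log_ratio_gamma n : (1 <= n)%nat ->
  omega_log_ratio n = ln (gamma_ratio ((INR n + 1) / 2)).
Proof.
  intros Hn. unfold omega_log_ratio, Omega, gamma_ratio. f_equal.
  rewrite minus_INR, plus_INR by lia. simpl (INR 1).
  set (y := (INR n + 1) / 2).
  replace (INR n / 2 + 1) with (y + 1/2) by (unfold y; field).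
  replace ((INR n - 1) / 2 + 1) with y by (unfold y; field).
  replace ((INR n + 1) / 2 + 1) with (y + 1) by (unfold y; field).
  assert (Hy : 1 <= y) by (unfold y; pose proof (le_INR 1 n Hn); simpl in *; lra).
  pose proof (Gamma_pos y Hy). pose proof (Gamma_pos (y + 1/2) ltac:(lra)).
  pose proof (Gamma_pos (y + 1) ltac:(lra)).
  assert (HP : Rpower PI ((INR n - 1) / 2) * Rpower PI y = Rpower PI (INR n / 2) ^ 2).
  { rewrite <- Rpower_plus. simpl. rewrite Rmult_1_r, <- Rpower_plus. f_equal. unfold y. field. }
  pose proof (Rpower_pos PI (INR n / 2)). pose proof (Rpower_pos PI ((INR n - 1) / 2)).
  pose proof (Rpower_pos PI y).
  unfold Rdiv at 1 2. rewrite Rpow_mult_distr, <- HP. field. repeat split; lra.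
Qed.

Lemma omega_log_ratio_nonneg n : (1 <= n)%nat -> 0 <= omega_log_ratio n.
Proof.
  intros Hn. rewrite omega_log_ratio_gamma by auto. set (y := (INR n + 1) / 2).
  assert (Hy : 1 <= y) by (unfold y; pose proof (le_INR 1 n Hn); simpl in *; lra).
  pose proof (Gamma_half_sq_le y Hy). pose proof (Gamma_pos (y + 1/2) ltac:(lra)).
  assert (0 < Gamma (y + 1/2) ^ 2) by (apply pow_lt; lra).
  rewrite <- ln_1. apply ln_le; [lra|]. unfold gamma_ratio.
  apply Rmult_le_reg_r with (Gamma (y + 1/2) ^ 2); auto.
  unfold Rdiv. rewrite Rmult_assoc, Rinv_l; lra.
Qed.

(* [gamma_ratio y * gamma_ratio (y + 1/2) = (y + 1/2) / y] by [Gamma (x + 1) = x Gamma x]. *)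
Lemma omega_log_ratio_pair_sum n : (1 <= n)%nat ->
  omega_log_ratio n + omega_log_ratio (S n) = ln (INR n + 2) - ln (INR n + 1).
Proof.
  intros Hn. rewrite !omega_log_ratio_gamma, S_INR by lia. set (y := (INR n + 1) / 2).
  replace ((INR n + 1 + 1) / 2) with (y + 1/2) by (unfold y; field).
  assert (Hy : 1 <= y) by (unfold y; pose proof (le_INR 1 n Hn); simpl in *; lra).
  pose proof (Gamma_pos y Hy). pose proof (Gamma_pos (y + 1/2) ltac:(lra)).
  assert (Gamma (y + 1/2) ^ 2 <> 0) by (apply pow_nonzero; lra).
  assert (0 < gamma_ratio y /\ 0 < gamma_ratio (y + 1/2)) as [].
  { pose proof (Gamma_pos (y + 1) ltac:(lra)). pose proof (Gamma_pos (y + 1/2 + 1) ltac:(lra)).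
    pose proof (Gamma_pos (y + 1/2 + 1/2) ltac:(lra)).
    unfold gamma_ratio. split; apply Rdiv_lt_0_compat; try apply pow_lt; nra. }
  pose proof (pos_INR n). rewrite <- ln_mult, <- ln_div by lra. f_equal.
  unfold gamma_ratio. rewrite !Gamma_succ by lra.
  replace (y + 1/2 + 1/2) with (y + 1) by field. rewrite Gamma_succ by lra.
  transitivity ((y + 1/2) / y); [field; repeat split; lra | unfold y; field; lra].
Qed.

Lemma omega_log_ratio_le_inv n : (1 <= n)%nat -> omega_log_ratio n <= / INR n.
Proof.
  intros Hn. pose proof (le_INR 1 n Hn). simpl in *.
  pose proof (omega_log_ratio_pair_sum n Hn). pose proof (omega_log_ratio_nonneg (S n) ltac:(lia)).
  assert (ln (INR n + 2) - ln (INR n + 1) <= / INR n).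
  { rewrite <- ln_div by lra. eapply Rle_trans; [apply ln_le_sub_1, Rdiv_lt_0_compat; lra|].
    replace ((INR n + 2) / (INR n + 1) - 1) with (/ (INR n + 1)) by (field; lra).
    apply Rinv_le_contravar; lra. }
  lra.
Qed.

Lemma Rabs_lambda_sum_le N n : (1 <= n)%nat ->
  Rabs (lambda_sum N n) <= rsum N (fun i => Rabs (lambda (S i))) / INR n.
Proof.
  intros Hn. assert (H1 : 1 <= INR n) by (apply (le_INR 1); lia).
  rewrite lambda_sum_rsum. eapply Rle_trans; [apply Rabs_rsum|].
  unfold Rdiv. rewrite Rmult_comm, <- rsum_scal. apply rsum_le. intros i _.
  unfold Rdiv. rewrite Rabs_mult, (Rmult_comm (/ INR n)).
  apply Rmult_le_compat_l; [apply Rabs_pos|].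
  rewrite Rabs_pos_eq by (apply Rlt_le, Rinv_0_lt_compat, pow_lt; lra).
  apply Rinv_le_contravar; [lra|]. rewrite <- (pow_1 (INR n)) at 1. apply Rle_pow; auto; lia.
Qed.

Lemma lambda_sum_S N n : lambda_sum (S N) n = lambda_sum N n + lambda (S N) / INR n ^ S N.
Proof. rewrite !lambda_sum_rsum. reflexivity. Qed.

Lemma omega_remainder_cv N : Un_cv (fun n => omega_log_ratio n - lambda_sum N n) 0.
Proof.
  apply (Un_cv_0_of_le_inv _ (1 + rsum N (fun i => Rabs (lambda (S i))))). intros n Hn.
  pose proof (le_INR 1 n Hn). simpl in *.
  pose proof (omega_log_ratio_nonneg n Hn). pose proof (omega_log_ratio_le_inv n Hn).
  pose proof (Rabs_lambda_sum_le N n Hn).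
  eapply Rle_trans; [apply Rabs_triang|]. rewrite Rabs_Ropp, Rabs_pos_eq by lra.
  replace ((1 + _) / INR n) with (/ INR n + rsum N (fun i => Rabs (lambda (S i))) / INR n)
    by (field; lra).
  lra.
Qed.

Theorem theorem13 :
  forall N : nat, exists (K : R) (M : nat), forall n : nat, (M <= n)%nat ->
    Rabs (ln (Omega n ^ 2 / (Omega (n - 1) * Omega (n + 1)))
          - sum_range 1 N (fun j => lambda j / INR n ^ j))
    <= K / INR n ^ (N + 1).
Proof.
  intros N. destruct (lambda_sum_pair_bound (S N)) as (C & M & HM & HC).
  set (e := fun n => omega_log_ratio n - lambda_sum (S N) n).
  assert (He : forall n, (Nat.max M 2 <= n)%nat -> Rabs (e n + e (S n)) <= C / INR n ^ S (S N)).
  { intros n Hn. unfold e. rewrite <- Rabs_Ropp.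
    replace (- _) with (lambda_sum (S N) n + lambda_sum (S N) (S n)
                        - (omega_log_ratio n + omega_log_ratio (S n))) by ring.
    rewrite omega_log_ratio_pair_sum by lia. apply HC. lia. }
  exists (2 * C + Rabs (lambda (S N))), (Nat.max M 2). intros n Hn.
  pose proof (alternating_tail_bound e C N (Nat.max M 2) ltac:(lia) (omega_remainder_cv (S N)) He n Hn).
  assert (0 < INR n ^ S N) by (apply pow_lt, lt_0_INR; lia).
  fold (omega_log_ratio n). fold (lambda_sum N n). rewrite Nat.add_1_r.
  replace (omega_log_ratio n - lambda_sum N n) with (e n + lambda (S N) / INR n ^ S N)
    by (unfold e; rewrite lambda_sum_S; ring).
  eapply Rle_trans; [apply Rabs_triang|]. unfold Rdiv in *.
  rewrite Rabs_mult, (Rabs_pos_eq (/ _)) by (apply Rlt_le, Rinv_0_lt_compat; lra). lra.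
Qed.
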